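(* There exists a decreasing sequence $(T_k)_{k\in\mathbb{N}}$ of compact subsets of $\mathbb{R}^2$ such that: (i) $T_0$ is the closed unit disk $\{x:\|x\|\le1\}$; (ii) $T_{k+1}\subset\operatorname{int}T_k$ for every $k\in\mathbb{N}$; (iii) $\bigcap_{k\in\mathbb{N}}T_k$ is the closed disk $\{x:\|x\|\le r\}$ for some $r>0$; (iv) $\sum_{k=0}^{+\infty}\operatorname{Dist}(T_k,T_{k+1})=+\infty$.
   Context: $\operatorname{Dist}(S_1,S_2)=\max\{\sup_{x\in S_1}\operatorname{dist}(x,S_2),\sup_{x\in S_2}\operatorname{dist}(x,S_1)\}$ is the Hausdorff distance, with $\operatorname{dist}(x,S)=\inf_{y\in S}\|x-y\|$. *)

From HB Require Import structures.
From mathcomp Require Import all_boot all_order all_algebra.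
From mathcomp Require Import all_classical all_reals all_analysis.
From mathcomp Require Import Rstruct Rstruct_topology.
From Stdlib Require Reals.
Notation R := Rdefinitions.R.
Set Implicit Arguments. Unset Strict Implicit. Unset Printing Implicit Defensive.
Import Order.TTheory GRing.Theory Num.Theory.
Local Open Scope classical_set_scope.
Local Open Scope ring_scope.

(* The plane R^2 is modelled as R * R (product topology = Euclidean topology). *)
Definition pt := (R * R)%type.

Definition enorm (x : pt) : R := Num.sqrt (x.1 ^+ 2 + x.2 ^+ 2).

(* dist(x,S) = inf_{y in S} ||x - y||, as an extended real (+oo if S empty). *)
Definition edist (x : pt) (S : set pt) : \bar R :=
  ereal_inf [set (enorm (x.1 - y.1, x.2 - y.2))%:E | y in S].

Definition Dist (S1 S2 : set pt) : \bar R :=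
  maxe (ereal_sup [set edist x S2 | x in S1])
       (ereal_sup [set edist x S1 | x in S2]).

Definition cdisk (r : R) : set pt := [set x | enorm x <= r].

From Pilot Require Import Defs.
From HB Require Import structures.
From mathcomp Require Import all_boot all_order all_algebra.
From mathcomp Require Import all_classical all_reals all_analysis.
From mathcomp Require Import Rstruct Rstruct_topology.
From mathcomp Require Import ring lra.
Import Order.TTheory GRing.Theory Num.Theory.
Local Open Scope classical_set_scope.
Local Open Scope ring_scope.
Set Implicit Arguments. Unset Strict Implicit. Unset Printing Implicit Defensive.

(* Take T_k = {x : |x| <= rho_k(x_1)} with rho_0 = 1 and, for k >= 1,
   rho_k = 1/2 + 1/(4(k+1)) + b_k, where, writing k + 1 = P + I with P a power
   of two and 0 <= I < P, b_k equals 1/(8P) left of 2I/(8P), 1/(4P) right of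
   (2I+1)/(8P), and is affine in between.  The radii are continuous, decrease
   strictly and tend uniformly to 1/2; this gives compactness, the nesting in
   interiors and the limit disk of radius 1/2.  Within a dyadic block the ramp
   of stage k+1 starts 1/(8P) to the right of the top (2I+1)/(8P) of the ramp
   of stage k, and from one block to the next the heights halve; either way the
   boundary point of T_k above that top is at distance at least
   1/(8P) >= 1/(8(k+1)) from T_{k+1}, and the harmonic series diverges. *)

Lemma enorm_ge_fst (x : pt) : `|x.1| <= enorm x.
Proof.
rewrite /enorm -sqrtr_sqr ler_sqrt; last by rewrite addr_ge0 // sqr_ge0.
by rewrite lerDl sqr_ge0.
Qed.

Lemma enorm_ge_snd (x : pt) : `|x.2| <= enorm x.
Proof. by have := enorm_ge_fst (x.2, x.1); rewrite /enorm /= addrC. Qed.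

Lemma enorm_pythagoras (a r : R) : `|a| <= r -> enorm (a, Num.sqrt (r ^+ 2 - a ^+ 2)) = r.
Proof.
move=> ar; have r0 : 0 <= r := le_trans (normr_ge0 a) ar.
have a2r2 : a ^+ 2 <= r ^+ 2 by rewrite -real_normK ?num_real // ler_sqr ?nnegrE.
by rewrite /enorm /= sqr_sqrtr ?subr_ge0 // addrC subrK sqrtr_sqr ger0_norm.
Qed.

Lemma dot_le_enorm (a b : pt) : a.1 * b.1 + a.2 * b.2 <= enorm a * enorm b.
Proof.
rewrite /enorm -sqrtrM ?addr_ge0 ?sqr_ge0 // (le_trans (ler_norm _)) //.
rewrite -sqrtr_sqr ler_sqrt ?mulr_ge0 ?addr_ge0 ?sqr_ge0 // -subr_ge0.
have -> : (a.1 ^+ 2 + a.2 ^+ 2) * (b.1 ^+ 2 + b.2 ^+ 2) - (a.1 * b.1 + a.2 * b.2) ^+ 2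
   = (a.1 * b.2 - a.2 * b.1) ^+ 2 by ring.
exact: sqr_ge0.
Qed.

Lemma enormD (a b : pt) : enorm (a.1 + b.1, a.2 + b.2) <= enorm a + enorm b.
Proof.
have sqr_enorm (x : pt) : enorm x ^+ 2 = x.1 ^+ 2 + x.2 ^+ 2.
  by rewrite sqr_sqrtr ?addr_ge0 ?sqr_ge0.
have := dot_le_enorm a b; have a0 : 0 <= enorm a := sqrtr_ge0 _.
have b0 : 0 <= enorm b := sqrtr_ge0 _.
rewrite -(ger0_norm (addr_ge0 a0 b0)) {1}/enorm -sqrtr_sqr ler_sqrt ?sqr_ge0 //=.
have -> : (enorm a + enorm b) ^+ 2 = enorm a ^+ 2 + enorm b ^+ 2 + 2 * (enorm a * enorm b).
  by ring.
rewrite !sqr_enorm; move: (enorm a * enorm b) => ab; nra.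
Qed.

Lemma enorm_sub_ge (p y : pt) : enorm p - enorm y <= enorm (p.1 - y.1, p.2 - y.2).
Proof.
rewrite lerBlDr; have := enormD (p.1 - y.1, p.2 - y.2) y.
by rewrite /= !subrK; case: p.
Qed.

Lemma continuous_enorm : continuous enorm.
Proof.
move=> x; apply: (@continuous_comp _ _ _ (fun x : pt => x.1 ^+ 2 + x.2 ^+ 2) Num.sqrt);
  last exact: sqrt_continuous.
have fst_x : (fun y : pt => y.1) @ x --> x.1 by exact: cvg_fst.
have snd_x : (fun y : pt => y.2) @ x --> x.2 by exact: cvg_snd.
by apply: (@cvgD _ R^o); rewrite expr2; apply: cvgM.
Qed.

Definition radial_set (f : R -> R) : set pt := [set x | enorm x <= f x.1].

Section RadialSet.
Variable f : R -> R.
Hypothesis f_cont : continuous f.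

Let excess_cont : continuous (fun x : pt => enorm x - f x.1).
Proof.
move=> x; have fst_x : (fun y : pt => y.1) @ x --> x.1 by exact: cvg_fst.
have f_fst : (fun y : pt => f y.1) @ x --> f x.1.
  exact: (continuous_comp fst_x (@f_cont _)).
by apply: (@cvgB _ R^o); [exact: continuous_enorm | exact: f_fst].
Qed.

Lemma closed_radial_set : closed (radial_set f).
Proof.
have -> : radial_set f = (fun x : pt => enorm x - f x.1) @^-1` [set r : R | r <= 0].
  by apply/seteqP; split => x /=; rewrite subr_le0.
by apply: preimage_closed; [move=> x _; exact: excess_cont | exact: closed_le].
Qed.

Lemma radial_set_sub_interior (g : R -> R) :
  (forall t, g t < f t) -> radial_set g `<=` (radial_set f)°.
Proof.
move=> gf; set O := [set x : pt | enorm x - f x.1 < 0].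
have O_open : open O.
  have -> : O = (fun x => enorm x - f x.1) @^-1` [set r : R | r < 0] by [].
  by apply: open_comp; [move=> x _; exact: excess_cont | exact: open_lt].
have : O `<=` radial_set f by move=> x; rewrite /O /= subr_lt0 => /ltW.
rewrite (open_subsetE _ O_open); apply: subset_trans => x gx.
by rewrite /O /= subr_lt0 (le_lt_trans gx).
Qed.

Lemma compact_radial_set (c : R) : (forall t, f t <= c) -> compact (radial_set f).
Proof.
move=> fc; apply: (subclosed_compact closed_radial_set
  (compact_setX (@segment_compact R (- c) c) (@segment_compact R (- c) c))).
move=> x /= fx; have xc : enorm x <= c := le_trans fx (fc _).
split; rewrite /= in_itv /= -ler_norml.
  exact: le_trans (enorm_ge_fst x) xc.
exact: le_trans (enorm_ge_snd x) xc.
Qed.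

End RadialSet.

Lemma bigcap_radial_set (f : nat -> R -> R) (r : R) :
  (forall k t, r <= f k t <= r + k.+1%:R^-1) -> \bigcap_k radial_set (f k) = cdisk r.
Proof.
move=> fr; apply/seteqP; split => x /=; last first.
  by move=> xr k _; have /andP[+ _] := fr k x.1; apply: le_trans.
move=> xf; rewrite /cdisk /= leNgt; apply/negP => rx.
have e0 : 0 < (enorm x - r)^-1 by rewrite invr_gt0 subr_gt0.
have /archi_boundP := ltW e0; set n := Num.Def.archi_bound _ => en.
have : n.+1%:R^-1 < enorm x - r.
  rewrite -[_ - r]invrK ltf_pV2 ?posrE ?ltr0n //.
  by apply: lt_le_trans en _; rewrite ler_nat.
have : enorm x <= f n x.1 := xf n I; have /andP[_] := fr n x.1.
move: (f n x.1) (n.+1%:R^-1) => a b; lra.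
Qed.

Lemma Dist_ge (S1 S2 : set pt) (p : pt) (d : R) : S1 p ->
  (forall y, S2 y -> d <= `|p.1 - y.1| \/ enorm y + d <= enorm p) ->
  (d%:E <= Dist S1 S2)%E.
Proof.
move=> S1p sep; rewrite /Dist le_max; apply/orP; left.
have dp : (d%:E <= Defs.edist p S2)%E.
  apply/ereal_infP => _ [y S2y <-]; rewrite lee_fin.
  case: (sep y S2y) => [d1|d2]; first exact: le_trans d1 (enorm_ge_fst (_, _)).
  by have := enorm_sub_ge p y; lra.
by apply: le_trans dp _; apply: ereal_sup_ubound; exists p.
Qed.

Lemma sum_harmonic_minorant_cvgy (c : R) (u : nat -> \bar R) : 0 < c ->
  (forall k, ((c / k.+1%:R)%:E <= u k)%E) ->
  (fun n => (\sum_(0 <= k < n) u k)%E) @ \oo --> +oo%E.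
Proof.
move=> c0 cu.
have H : series (@harmonic R) @ \oo --> +oo.
  apply: nondecreasing_dvgn_lt; last exact: dvg_harmonic.
  by apply: (@nondecreasing_series _ _ predT 0) => n _ _; exact: harmonic_ge0.
have cH : c * series (@harmonic R) n @[n --> \oo] --> +oo.
  apply/cvgryPge => A; move/cvgryPge: H => /(_ (A / c)); apply: filterS => n.
  by rewrite ler_pdivrMr // mulrC.
apply: (@gee_cvgy _ _ _ _ (fun n => (c * series (@harmonic R) n)%:E)); last first.
  exact/cvgeryP.
apply: nearW => n; rewrite /series /= mulr_sumr -sumEFin.
by apply: lee_sum => k _; exact: cu.
Qed.

Definition pow2_floor (n : nat) : nat := 2 ^ trunc_log 2 n.

Lemma pow2_floor_gt0 n : (0 < pow2_floor n)%N.
Proof. by rewrite expn_gt0. Qed.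

Lemma pow2_floor_bounds n : (0 < n)%N -> (pow2_floor n <= n < (pow2_floor n).*2)%N.
Proof. by move=> n0; rewrite -mul2n -expnS; exact: trunc_log_bounds. Qed.

Lemma pow2_floorS n : (0 < n)%N ->
  pow2_floor n.+1 = pow2_floor n \/ pow2_floor n.+1 = (pow2_floor n).*2.
Proof.
move=> n0; have /andP[lo hi] := pow2_floor_bounds n0.
rewrite /pow2_floor -mul2n -expnS in hi *.
have [lt|ge] := ltnP n.+1 (2 ^ (trunc_log 2 n).+1).
  by left; rewrite (@trunc_log_eq _ (trunc_log 2 n)) // leqW.
have -> : n.+1 = (2 ^ (trunc_log 2 n).+1)%N by apply/eqP; rewrite eqn_leq hi.
by right; rewrite (@trunc_log_eq _ (trunc_log 2 n).+1) // leqnn /= ltn_exp2l.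
Qed.

Definition scale (k : nat) : R := (pow2_floor k.+1)%:R.
Definition slot (k : nat) : R := (k.+1 - pow2_floor k.+1)%:R.

Lemma scale_ge1 k : 1 <= scale k.
Proof. by rewrite ler1n pow2_floor_gt0. Qed.

Lemma scale_gt0 k : 0 < scale k.
Proof. exact: lt_le_trans ltr01 (scale_ge1 k). Qed.

Lemma scale_bounds k : scale k <= k.+1%:R < 2 * scale k.
Proof.
have /andP[lo hi] := pow2_floor_bounds (ltn0Sn k).
by rewrite /scale ler_nat lo -natrM ltr_nat mul2n.
Qed.

Lemma slot_lt k : slot k + 1 <= scale k.
Proof.
have /andP[lo hi] := pow2_floor_bounds (ltn0Sn k).
by rewrite /slot /scale natr1 ler_nat ltn_subLR // addnn.
Qed.

Lemma scaleS k : (scale k.+1 = scale k /\ slot k.+1 = slot k + 1) \/ scale k.+1 = 2 * scale k.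
Proof.
have /andP[lo _] := pow2_floor_bounds (ltn0Sn k).
rewrite /scale /slot; case: (pow2_floorS (ltn0Sn k)) => ->; last first.
  by right; rewrite -mul2n natrM.
by left; split => //; rewrite natr1 subSn.
Qed.

Definition ramp (u : R) : R := Num.min 1 (Num.max 0 u).

Lemma ramp_ge0 u : 0 <= ramp u.
Proof. by rewrite /ramp le_min ler01 le_max lexx. Qed.

Lemma ramp_le1 u : ramp u <= 1.
Proof. by rewrite /ramp ge_min lexx. Qed.

Lemma ramp_le u v : u <= v -> ramp u <= ramp v.
Proof. by move=> uv; rewrite /ramp le_min !ge_min lexx /= ge_max !le_max lexx uv !orbT. Qed.

Lemma ramp_eq0 u : u <= 0 -> ramp u = 0.
Proof. by move=> u0; rewrite /ramp (max_l u0) (min_r ler01). Qed.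

Lemma ramp1 : ramp 1 = 1.
Proof. by rewrite /ramp (max_r ler01) minxx. Qed.

Lemma continuous_ramp : continuous ramp.
Proof.
move=> u; apply: (@continuous_min _ R^o (cst 1) (fun v => Num.max 0 v)).
  exact: cst_continuous.
by apply: (@continuous_max _ R^o (cst 0) id); [exact: cst_continuous | exact: cvg_id].
Qed.

Definition bump (k : nat) (t : R) : R :=
  (1 + ramp (8 * scale k * t - 2 * slot k)) / (8 * scale k).

Definition peak (k : nat) : R := (2 * slot k + 1) / (8 * scale k).

Lemma bump_ge k t : (8 * scale k)^-1 <= bump k t.
Proof.
rewrite /bump ler_pdivlMr ?mulr_gt0 ?scale_gt0 // mulVf ?gt_eqF ?mulr_gt0 ?scale_gt0 //.
by rewrite lerDl ramp_ge0.
Qed.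

Lemma bump_le k t : bump k t <= (4 * scale k)^-1.
Proof.
have P0 := scale_gt0 k; have := ramp_le1 (8 * scale k * t - 2 * slot k).
rewrite /bump ler_pdivrMr ?mulr_gt0 //.
have -> : (4 * scale k)^-1 * (8 * scale k) = 2 by field; rewrite gt_eqF.
lra.
Qed.

Lemma bumpS_le k t : bump k.+1 t <= bump k t.
Proof.
have P0 := scale_gt0 k; have := bump_le k.+1 t; have := bump_ge k t.
case: (scaleS k) => [[eqP eqI] _ _|eqP lo hi].
  rewrite /bump eqP eqI ler_pM2r ?invr_gt0 ?mulr_gt0 // lerD2l.
  apply: ramp_le; lra.
apply: le_trans hi (le_trans _ lo).
by rewrite eqP mulrA (_ : 4 * 2 = 8) //; ring.
Qed.

Lemma bump_peak k : bump k (peak k) = (4 * scale k)^-1.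
Proof.
have P0 := scale_gt0 k; rewrite /bump.
have -> : 8 * scale k * peak k - 2 * slot k = 1 by rewrite /peak; field; rewrite gt_eqF.
by rewrite ramp1; field; rewrite gt_eqF.
Qed.

Lemma bumpS_near_peak k s : `|s - peak k| < (8 * scale k)^-1 ->
  bump k.+1 s <= (8 * scale k)^-1.
Proof.
have P0 := scale_gt0 k.
case: (scaleS k) => [[eqP eqI]|eqP] near; last first.
  by apply: le_trans (bump_le _ _) _; rewrite eqP mulrA (_ : 4 * 2 = 8) //; ring.
rewrite /bump eqP eqI ramp_eq0 ?addr0 ?div1r // subr_le0.
have : s < 2 * (slot k + 1) / (8 * scale k).
  have -> : 2 * (slot k + 1) / (8 * scale k) = (8 * scale k)^-1 + peak k.
    by rewrite /peak; field; rewrite gt_eqF.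
  by rewrite -ltrBlDr; move: near; rewrite ltr_norml => /andP[].
by rewrite ltr_pdivlMr ?mulr_gt0 // mulrC => /ltW.
Qed.

Lemma peak_bounds k : 0 <= peak k <= 4^-1.
Proof.
have P0 := scale_gt0 k; have := slot_lt k; have I0 : 0 <= slot k := ler0n _ _.
rewrite /peak divr_ge0 ?mulr_gt0 ?addr_ge0 ?mulr_ge0 //= ler_pdivrMr ?mulr_gt0 //.
lra.
Qed.

Lemma continuous_bump k : continuous (bump k).
Proof.
move=> t.
have lin : 8 * scale k * u - 2 * slot k @[u --> t] --> 8 * scale k * t - 2 * slot k.
  by apply: (@cvgB _ R^o); [apply: cvgMl_tmp; exact: cvg_id | exact: cvg_cst].
have ramp_lin : ramp (8 * scale k * u - 2 * slot k) @[u --> t] -->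
                ramp (8 * scale k * t - 2 * slot k).
  exact: (continuous_comp lin (@continuous_ramp _)).
by apply: cvgMr_tmp; apply: (@cvgD _ R^o); [exact: cvg_cst | exact: ramp_lin].
Qed.

Definition shrink (k : nat) : R := (4 * k.+1%:R)^-1.

Lemma shrink_gt0 k : 0 < shrink k.
Proof. by rewrite invr_gt0 mulr_gt0 ?ltr0n. Qed.

Lemma shrinkS_lt k : shrink k.+1 < shrink k.
Proof. by rewrite ltf_pV2 ?posrE ?mulr_gt0 ?ltr0n // ltr_pM2l // ltr_nat. Qed.

Definition radius (k : nat) (t : R) : R :=
  if k is 0 then 1 else 2^-1 + shrink k + bump k t.

Lemma continuous_radius k : continuous (radius k).
Proof.
case: k => [|k] t; first exact: cvg_cst.
by apply: (@cvgD _ R^o); [exact: cvg_cst | exact: continuous_bump].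
Qed.

Lemma radius_gt k t : 2^-1 < radius k t.
Proof.
case: k => [|k] /=; first lra.
have := bump_ge k.+1 t; have := shrink_gt0 k.+1.
have : 0 < (8 * scale k.+1)^-1 by rewrite invr_gt0 mulr_gt0 ?scale_gt0.
lra.
Qed.

Lemma radius_le k t : radius k t <= 2^-1 + k.+1%:R^-1.
Proof.
case: k => [|k] /=; first by rewrite invr1; lra.
have /andP[_ lt2] := scale_bounds k.+1.
have := bump_le k.+1 t; rewrite /shrink.
set P := scale _; set n : R := k.+2%:R; have n0 : 0 < n by rewrite ltr0n.
have P0 : 0 < P := scale_gt0 _.
rewrite !invfM => hb.
have : (4^-1 * P^-1) < 2^-1 * n^-1.
  by rewrite -!invfM ltf_pV2 ?posrE ?mulr_gt0 //; lra.
have : 0 < n^-1 by rewrite invr_gt0.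
clearbody P n; lra.
Qed.

Lemma radiusS_le k t : radius k.+1 t <= 7 / 8.
Proof.
have := bump_le k.+1 t; have := scale_ge1 k.+1.
set P := scale _ => P1 hb; clearbody P.
have : (4 * P)^-1 <= 4^-1 by rewrite lef_pV2 ?posrE ?mulr_gt0; lra.
have : shrink k.+1 <= 8^-1.
  by rewrite lef_pV2 ?posrE ?mulr_gt0 ?ltr0n // -natrM ler_nat !mulnS addnA leq_addr.
rewrite /=; lra.
Qed.

Lemma radiusS_lt k t : radius k.+1 t < radius k t.
Proof.
case: k => [|k]; first by have := radiusS_le 0 t; rewrite [radius 0 t]/=; lra.
have := bumpS_le k.+1 t; have := shrinkS_lt k.+1.
rewrite /=; lra.
Qed.

Lemma Dist_radial_set_step k :
  ((8^-1 / k.+1%:R)%:E <= Dist (radial_set (radius k)) (radial_set (radius k.+1)))%E.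
Proof.
case: k => [|k].
  have enorm10 : enorm (1, 0) = 1 by rewrite /enorm /= expr0n expr1n addr0 sqrtr1.
  apply: (@Dist_ge _ _ (1, 0)) => [|y Ty]; first by rewrite /radial_set /= enorm10.
  have : enorm y <= radius 1 y.1 := Ty.
  by right; rewrite enorm10 divr1; have := radiusS_le 0 y.1; lra.
have P0 := scale_gt0 k.+1; have /andP[t0 t4] := peak_bounds k.+1.
have gap : 8^-1 / k.+2%:R <= (8 * scale k.+1)^-1.
  rewrite invfM ler_pM2l ?invr_gt0 // lef_pV2 ?posrE ?ltr0n ?pow2_floor_gt0 //.
  by have /andP[] := scale_bounds k.+1.
suff D : (((8 * scale k.+1)^-1)%:E <=
          Dist (radial_set (radius k.+1)) (radial_set (radius k.+2)))%E.
  by apply: le_trans _ D; rewrite lee_fin.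
have top : radius k.+1 (peak k.+1) = 2^-1 + shrink k.+1 + 2 * (8 * scale k.+1)^-1.
  by rewrite /= bump_peak; congr (_ + _); field; rewrite gt_eqF.
have t_le : `|peak k.+1| <= radius k.+1 (peak k.+1).
  by have := radius_gt k.+1 (peak k.+1); rewrite ger0_norm //; lra.
set p := (peak k.+1, Num.sqrt (radius k.+1 (peak k.+1) ^+ 2 - peak k.+1 ^+ 2)).
have Tp : enorm p = radius k.+1 (peak k.+1) := enorm_pythagoras t_le.
apply: (@Dist_ge _ _ p) => [|y Ty]; first by rewrite /radial_set /= Tp.
have [near|far] := ltP `|y.1 - peak k.+1| (8 * scale k.+1)^-1; last by left; rewrite distrC.
right; have := bumpS_near_peak near; have := shrinkS_lt k.+1.
have : enorm y <= radius k.+2 y.1 := Ty.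
rewrite Tp top /=; lra.
Qed.

Theorem lemma4p10 :
  exists T : nat -> set pt,
    (forall k, compact (T k)) /\
    (forall k, T k.+1 `<=` T k) /\
    T 0%N = cdisk 1 /\
    (forall k, T k.+1 `<=` (T k)°) /\
    (exists r : R, 0 < r /\ \bigcap_k T k = cdisk r) /\
    ((fun n : nat => (\sum_(0 <= k < n) Dist (T k) (T k.+1))%E) @ \oo --> +oo%E).
Proof.
have T_int k : radial_set (radius k.+1) `<=` (radial_set (radius k))°.
  by apply: radial_set_sub_interior; [exact: continuous_radius | exact: radiusS_lt].
exists (fun k => radial_set (radius k)); split.
  by move=> k; apply: compact_radial_set; [exact: continuous_radius | exact: radius_le].
split; first by move=> k x /T_int /interior_subset.
split=> //; split; first exact: T_int.
split; last by apply: (@sum_harmonic_minorant_cvgy 8^-1) => //; exact: Dist_radial_set_step.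
exists 2^-1; split; first by rewrite invr_gt0 ltr0n.
by apply: bigcap_radial_set => k t; rewrite (ltW (radius_gt k t)) radius_le.
Qed.
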